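(* Grounded semantics is serialisable with the selection function $\alpha_{gr}(X,Y,Z)=X$ and the termination function $\beta_{co}(F,S)=1$ if $\mathrm{IS}^u(F)=\emptyset$ and $\beta_{co}(F,S)=0$ otherwise.
   Context: An abstract argumentation framework (AF) is a pair $F=(A,R)$ with $A$ a finite subset of a fixed universal set of arguments $\mathfrak{A}$ and $R\subseteq A\times A$ ($a\to b$ means $(a,b)\in R$). For $S\subseteq A$: $S^+=\{a\mid \exists b\in S: b\to a\}$, $S^-=\{a\mid\exists b\in S: a\to b\}$; for sets $S,S'$, $S\to S'$ means $S^+\cap S'\neq\emptyset$. $S$ is admissible if it is conflict-free and every attacker of an element of $S$ is attacked by some element of $S$. A complete extension is an admissible set containing every argument it defends; the grounded extension is the inclusion-minimal complete extension, and grounded semantics assigns to $F$ the set containing it. An initial set is a non-empty admissible set with no non-empty admissible proper subset; $\mathrm{IS}(F)$ is the set of initial sets. An initial set $S$ is unattacked if $S^-=\emptyset$; unchallenged if $S^-\neq\emptyset$ and no $S'\in\mathrm{IS}(F)$ has $S'\to S$; challenged if some $S'\in\mathrm{IS}(F)$ has $S'\to S$. Write $\mathrm{IS}^{u}(F),\mathrm{IS}^{uc}(F),\mathrm{IS}^{c}(F)$ for these sets. The reduct is $F^S=(A',R\cap(A'\times A'))$ with $A'=A\setminus(S\cup S^+)$. A selection function $\alpha$ maps any three sets $X,Y,Z$ of sets of arguments to a subset of $X\cup Y\cup Z$; a termination function $\beta$ maps pairs $(F,S)$ to $\{0,1\}$. Transitions: $(F,S)\to(F^{S'},S\cup S')$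 whenever $S'\in\alpha(\mathrm{IS}^u(F),\mathrm{IS}^{uc}(F),\mathrm{IS}^c(F))$. $(F,S)\leadsto^{\alpha,\beta}(F',S')$ means $(F',S')$ is reachable from $(F,S)$ in finitely many (possibly zero) transitions and $\beta(F',S')=1$. $\mathcal{E}^{\alpha,\beta}(F)$ is the set of all $S$ with $(F,\emptyset)\leadsto^{\alpha,\beta}(F',S)$ for some $F'$. A semantics $\sigma$ is serialisable with $\alpha,\beta$ if $\sigma(F)=\mathcal{E}^{\alpha,\beta}(F)$ for all AFs $F$. *)

From mathcomp Require Import all_boot.
From Stdlib Require Import Relation_Operators.
Set Implicit Arguments. Unset Strict Implicit. Unset Printing Implicit Defensive.

Section AF.
Variable T : finType.

Definition AF := ({set T} * {set T * T})%type.
Definition args (F : AF) : {set T} := F.1.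
Definition att (F : AF) (a b : T) : bool := (a, b) \in F.2.
Definition wf_AF (F : AF) : bool := F.2 \subset setX F.1 F.1.

Definition plus (F : AF) (S : {set T}) : {set T} :=
  [set a | [exists b in S, att F b a]].
Definition minus (F : AF) (S : {set T}) : {set T} :=
  [set a | [exists b in S, att F a b]].
Definition set_attacks (F : AF) (S S' : {set T}) : bool :=
  plus F S :&: S' != set0.

Definition conflict_free (F : AF) (S : {set T}) : bool :=
  [forall a in S, forall b in S, ~~ att F a b].
Definition defends (F : AF) (S : {set T}) (a : T) : bool :=
  [forall b, att F b a ==> [exists c in S, att F c b]].
Definition admissible (F : AF) (S : {set T}) : bool :=
  [&& S \subset args F, conflict_free F S & [forall a in S, defends F S a]].
Definition complete (F : AF) (S : {set T}) : bool :=
  admissible F S && [forall a in args F, defends F S a ==> (a \in S)].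
Definition grounded_ext (F : AF) (S : {set T}) : Prop :=
  complete F S /\ forall S', complete F S' -> S' \subset S -> S' = S.
Definition grounded_sem (F : AF) (S : {set T}) : Prop := grounded_ext F S.

Definition initial (F : AF) (S : {set T}) : bool :=
  [&& S != set0, admissible F S &
      [forall S' : {set T}, (S' \proper S) ==> ~~ ((S' != set0) && admissible F S')]].
Definition IS (F : AF) : {set {set T}} := [set S | initial F S].
Definition IS_u (F : AF) : {set {set T}} :=
  [set S in IS F | minus F S == set0].
Definition IS_uc (F : AF) : {set {set T}} :=
  [set S in IS F | (minus F S != set0) && ~~ [exists S' in IS F, set_attacks F S' S]].
Definition IS_c (F : AF) : {set {set T}} :=
  [set S in IS F | [exists S' in IS F, set_attacks F S' S]].

Definition reduct (F : AF) (S : {set T}) : AF :=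
  let A' := args F :\: (S :|: plus F S) in (A', F.2 :&: setX A' A').

Definition selection_fun :=
  {alpha : {set {set T}} -> {set {set T}} -> {set {set T}} -> {set {set T}} |
    forall X Y Z, alpha X Y Z \subset X :|: Y :|: Z}.
Definition termination_fun := AF -> {set T} -> bool.

Definition state := (AF * {set T})%type.
Definition trans (alpha : selection_fun) (s s' : state) : Prop :=
  exists2 S', S' \in proj1_sig alpha (IS_u s.1) (IS_uc s.1) (IS_c s.1) &
    s' = (reduct s.1 S', s.2 :|: S').
Definition reach (alpha : selection_fun) : state -> state -> Prop :=
  clos_refl_trans state (trans alpha).
Definition leadsto (alpha : selection_fun) (beta : termination_fun) (s s' : state) : Prop :=
  reach alpha s s' /\ beta s'.1 s'.2.
Definition ext_ab (alpha : selection_fun) (beta : termination_fun) (F : AF) (S : {set T}) : Prop :=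
  exists F', leadsto alpha beta (F, set0) (F', S).

Definition serialisable (sigma : AF -> {set T} -> Prop)
  (alpha : selection_fun) (beta : termination_fun) : Prop :=
  forall F : AF, wf_AF F -> forall S : {set T}, sigma F S <-> ext_ab alpha beta F S.

Lemma alpha_gr_sub : forall X Y Z : {set {set T}}, X \subset X :|: Y :|: Z.
Proof. by move=> X Y Z; rewrite -setUA subsetUl. Qed.
Definition alpha_gr : selection_fun := exist _ (fun X _ _ => X) alpha_gr_sub.
Definition beta_co : termination_fun := fun F _ => IS_u F == set0.
End AF.

From mathcomp Require Import all_boot.
From Stdlib Require Import Relation_Operators Operators_Properties.
Set Implicit Arguments. Unset Strict Implicit. Unset Printing Implicit Defensive.

(* Along a run from (F, {}) the accumulated set S stays admissible and is contained
   in every complete extension: an unattacked initial set U of the reduct F^S can be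
   attacked in F only from S^+, so S defends U, and S :|: U is again admissible and
   forced into every complete extension.  A run stops exactly when F^S has no
   unattacked initial set, and then S is complete, since an argument defended by S
   but outside S would be unattacked in F^S and so form an unattacked initial
   singleton there.  Thus terminal sets are least complete extensions, i.e. grounded,
   and a terminal state is always reached because every step shrinks the reduct. *)

Section Framework.
Variable T : finType.
Implicit Types (G : AF T) (S U E : {set T}) (a b x : T).

Lemma plusP G S x : reflect (exists2 b, b \in S & att G b x) (x \in plus G S).
Proof.
rewrite inE; apply: (iffP existsP) => [[b /andP[]] | [b bS bx]]; first by exists b.
by exists b; rewrite bS.
Qed.

Lemma plusS G S U : S \subset U -> plus G S \subset plus G U.
Proof.
move=> /subsetP sSU; apply/subsetP => x /plusP[b bS bx].
by apply/plusP; exists b; rewrite ?sSU.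
Qed.

Lemma plusU G S U : plus G (S :|: U) = plus G S :|: plus G U.
Proof.
apply/setP => x; rewrite in_setU; apply/plusP/orP => [[b] | ].
  by case/setUP => bS bx; [left | right]; apply/plusP; exists b.
by case=> /plusP[b bS bx]; exists b; rewrite // inE bS ?orbT.
Qed.

Lemma defendsP G S a :
  reflect (forall b, att G b a -> b \in plus G S) (defends G S a).
Proof.
apply: (iffP forallP) => [def b ba | def b].
  by have /implyP/(_ ba)/existsP[c /andP[cS cb]] := def b; apply/plusP; exists c.
by apply/implyP => /def/plusP[c cS cb]; apply/existsP; exists c; rewrite cS.
Qed.

Lemma defendsS G S U a : S \subset U -> defends G S a -> defends G U a.
Proof.
by move=> sSU /defendsP defSa; apply/defendsP => b /defSa; apply/subsetP/plusS.
Qed.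

Lemma admissibleP G S :
  reflect [/\ S \subset args G, {in S &, forall a b, ~~ att G a b}
            & {in S, forall a, defends G S a}]
          (admissible G S).
Proof.
apply: (iffP and3P) => [[sSA /forallP cf /forallP def] | [sSA cf def]].
  split=> // [a b aS bS | a aS].
    by have /implyP/(_ aS)/forallP/(_ b)/implyP := cf a; apply.
  by have /implyP := def a; apply.
split=> //; apply/forallP => a; apply/implyP => aS; last exact: def.
by apply/forallP => b; apply/implyP; apply: cf.
Qed.

Lemma admissible_notin_plus G S x : admissible G S -> x \in S -> x \notin plus G S.
Proof.
by case/admissibleP => _ cf _ xS; apply/plusP => -[b bS]; apply/negP/cf.
Qed.

Lemma admissible0 G : admissible G set0.
Proof. by apply/admissibleP; split=> [|a|a]; rewrite ?sub0set ?inE. Qed.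

Lemma completeP G E :
  reflect (admissible G E /\ {in args G, forall a, defends G E a -> a \in E})
          (complete G E).
Proof.
apply: (iffP andP) => [[admE /forallP cE] | [admE cE]]; split=> //.
  by move=> a aA; have /implyP/(_ aA)/implyP := cE a.
by apply/forallP => a; apply/implyP => aA; apply/implyP/cE.
Qed.

Lemma defended_in_complete G S E a :
  complete G E -> S \subset E -> a \in args G -> defends G S a -> a \in E.
Proof. by case/completeP => _ cE sSE aA /(defendsS sSE); apply: cE. Qed.

Lemma args_reduct G S x :
  (x \in args (reduct G S)) = [&& x \notin S, x \notin plus G S & x \in args G].
Proof. by rewrite /args /reduct /= in_setD in_setU negb_or andbA. Qed.

Lemma att_reduct G S a b :
  att (reduct G S) a b = [&& att G a b, a \in args (reduct G S) & b \in args (reduct G S)].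
Proof. by rewrite /att /reduct /args /= in_setI in_setX. Qed.

Lemma reduct_args_sub G S : args (reduct G S) \subset args G.
Proof. exact: subsetDl. Qed.

Lemma reduct_set0 G : wf_AF G -> reduct G set0 = G.
Proof.
have plus0 : plus G set0 = set0.
  by apply/setP => x; rewrite in_set0; apply/negbTE/plusP => -[b]; rewrite in_set0.
by case: G plus0 => A R /= plus0 /setIidPl wfG; rewrite /reduct plus0 setU0 setD0 wfG.
Qed.

Lemma plus_reduct G S U x : U \subset args (reduct G S) -> x \in args (reduct G S) ->
  (x \in plus (reduct G S) U) = (x \in plus G U).
Proof.
move=> /subsetP sUA xA; apply/plusP/plusP => -[b bU bx]; exists b => //.
  by rewrite att_reduct in bx; case/andP: bx.
by rewrite att_reduct bx xA sUA.
Qed.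

Lemma reduct_argsS G S U : S \subset U -> args (reduct G U) \subset args (reduct G S).
Proof.
move=> sSU; apply/subsetP => x; rewrite !args_reduct => /and3P[xU xpU ->].
by rewrite (contra (subsetP sSU x) xU) (contra (subsetP (plusS G sSU) x) xpU).
Qed.

Lemma reductE G S :
  reduct G S = (args (reduct G S), G.2 :&: setX (args (reduct G S)) (args (reduct G S))).
Proof. by []. Qed.

Lemma reduct_setU G S U : U \subset args (reduct G S) ->
  reduct G (S :|: U) = reduct (reduct G S) U.
Proof.
move=> sUA.
have argsSU : args (reduct G (S :|: U)) = args (reduct (reduct G S) U).
  apply/setP => x; rewrite [in RHS]args_reduct.
  case xA: (x \in args (reduct G S)); last first.
    by rewrite !andbF; apply: contraFF xA; apply/subsetP/reduct_argsS/subsetUl.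
  rewrite andbT plus_reduct // args_reduct plusU !in_setU !negb_or.
  by move: xA; rewrite args_reduct => /and3P[-> -> ->]; rewrite !andbT.
rewrite [LHS]reductE [RHS]reductE argsSU; congr pair.
rewrite [in (reduct G S).2]reductE -setIA; congr setI.
by apply/esym/setIidPr/setXS; apply: reduct_args_sub.
Qed.

Lemma card_reduct_lt G S : S != set0 -> S \subset args G ->
  #|args (reduct G S)| < #|args G|.
Proof.
case/set0Pn => x xS /subsetP sSA; apply/proper_card/properP.
split; first exact: reduct_args_sub.
by exists x; rewrite ?sSA // args_reduct xS.
Qed.

Lemma admissible_setU_defended G S U :
  admissible G S -> U \subset args (reduct G S) -> {in U, forall x, defends G S x} ->
  admissible G (S :|: U).
Proof.
move=> admS /subsetP sUA defU; have [sSA _ defS] := admissibleP _ _ admS.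
have defSU : {in S :|: U, forall x, defends G S x} by move=> x /setUP[/defS | /defU].
have notin_plus : {in S :|: U, forall x, x \notin plus G S}.
  move=> x /setUP[/(admissible_notin_plus admS) // | /sUA].
  by rewrite args_reduct => /and3P[].
apply/admissibleP; split.
- rewrite subUset sSA; apply/subsetP => x /sUA.
  exact/subsetP/reduct_args_sub.
- move=> a b aSU bSU; apply/negP => ab.
  by have := notin_plus a aSU; rewrite (defendsP _ _ _ (defSU b bSU) a ab).
- by move=> x /defSU; apply/defendsS/subsetUl.
Qed.

Lemma IS_u_admissible G S : S \in IS_u G -> admissible G S.
Proof. by rewrite !inE /initial => /andP[/and3P[]]. Qed.

Lemma IS_u_sub_args G S : S \in IS_u G -> S \subset args G.
Proof. by case/IS_u_admissible/admissibleP. Qed.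

Lemma IS_u_neq0 G S : S \in IS_u G -> S != set0.
Proof. by rewrite !inE /initial => /andP[/and3P[]]. Qed.

Lemma IS_u_unattacked G S : S \in IS_u G -> forall b x, x \in S -> ~~ att G b x.
Proof.
rewrite !inE => /andP[_ /eqP minus0] b x xS; apply/negP => bx.
have : b \in minus G S by rewrite inE; apply/existsP; exists x; rewrite xS.
by rewrite minus0 inE.
Qed.

Lemma unattacked_IS_u G a :
  a \in args G -> (forall b, ~~ att G b a) -> [set a] \in IS_u G.
Proof.
move=> aA unatt_a.
have adm_a : admissible G [set a].
  apply/admissibleP; split; first by rewrite sub1set.
    by move=> x y /set1P-> /set1P->.
  by move=> x /set1P->; apply/defendsP => b; rewrite (negbTE (unatt_a b)).
rewrite !inE /initial adm_a /= -andbA; apply/and3P; split.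
- by apply/set0Pn; exists a; rewrite inE.
- apply/forallP => U; apply/implyP => /properP[]; rewrite subset1.
  by case/orP => /eqP-> [x] xa; rewrite ?xa ?eqxx.
- apply/eqP/setP => x; rewrite !inE; apply/existsP => -[y /andP[/set1P-> xa]].
  by rewrite (negbTE (unatt_a x)) in xa.
Qed.

Lemma complete_of_IS_u_reduct0 G S :
  admissible G S -> IS_u (reduct G S) = set0 -> complete G S.
Proof.
move=> admS ISu0; apply/completeP; split=> // a aA def_a; apply: contraT => aS.
have a_notin_plus : a \notin plus G S.
  apply/plusP => -[c cS ca].
  by have := admissible_notin_plus admS cS; rewrite (defendsP _ _ _ def_a c ca).
suff : [set a] \in IS_u (reduct G S) by rewrite ISu0 inE.
apply: unattacked_IS_u; first by rewrite args_reduct aS a_notin_plus.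
move=> b; rewrite att_reduct; apply/negP => /and3P[ba bA _].
by move: bA; rewrite args_reduct (defendsP _ _ _ def_a b ba) andbF.
Qed.

Definition least_complete G E :=
  complete G E /\ forall E', complete G E' -> E \subset E'.

Lemma least_complete_grounded G E : least_complete G E -> grounded_ext G E.
Proof.
by case=> cE leE; split=> // E' cE' sE'E; apply/eqP; rewrite eqEsubset sE'E leE.
Qed.

Lemma trans_reduct_IS_u G S U : U \in IS_u (reduct G S) ->
  trans (@alpha_gr T) (reduct G S, S) (reduct G (S :|: U), S :|: U).
Proof. by move=> ISuU; exists U; rewrite // reduct_setU ?IS_u_sub_args. Qed.

Lemma leadsto_terminal G S :
  exists S', leadsto (@alpha_gr T) (@beta_co T) (reduct G S, S) (reduct G S', S').
Proof.
have [n] := ubnP #|args (reduct G S)|; elim: n S => // n IH S cardS.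
have [ISu0 | [U ISuU]] := set_0Vmem (IS_u (reduct G S)).
  by exists S; split; [apply: rt_refl | apply/eqP].
have [|S' [reachS' termS']] := IH (S :|: U).
  rewrite reduct_setU ?IS_u_sub_args //.
  exact: leq_trans (card_reduct_lt (IS_u_neq0 ISuU) (IS_u_sub_args ISuU)) (ltnSE cardS).
exists S'; split=> //.
exact: rt_trans (rt_step _ _ _ _ (trans_reduct_IS_u ISuU)) reachS'.
Qed.

End Framework.

Section GroundedRuns.
Variables (T : finType) (F : AF T).
Hypothesis wfF : wf_AF F.

Lemma att_args a b : att F a b -> (a \in args F) && (b \in args F).
Proof. by move/subsetP: wfF => wf ab; have := wf _ ab; rewrite in_setX. Qed.

Lemma IS_u_reduct_defended S U :
  U \in IS_u (reduct F S) -> {in U, forall x, defends F S x}.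
Proof.
move=> ISuU x xU; apply/defendsP => b bx.
have xA : x \in args (reduct F S) by apply: (subsetP (IS_u_sub_args ISuU)).
have /andP[bA _] := att_args bx.
case bA' : (b \in args (reduct F S)).
  by have := IS_u_unattacked ISuU b xU; rewrite att_reduct bx bA' xA.
move: bA'; rewrite args_reduct bA andbT => /nandP[/negbNE bS | /negbNE //].
by move: xA; rewrite args_reduct => /and3P[_ /plusP[]]; exists b.
Qed.

Definition grounded_approx S :=
  admissible F S /\ forall E, complete F E -> S \subset E.

Lemma grounded_approx0 : grounded_approx set0.
Proof. by split=> [|E _]; [apply: admissible0 | apply: sub0set]. Qed.

Lemma grounded_approx_step S U :
  grounded_approx S -> U \in IS_u (reduct F S) -> grounded_approx (S :|: U).
Proof.
move=> [admS leS] ISuU; have sUA := IS_u_sub_args ISuU.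
have defU := IS_u_reduct_defended ISuU.
split=> [|E cE]; first exact: admissible_setU_defended.
rewrite subUset leS //; apply/subsetP => x xU.
apply: defended_in_complete cE (leS E cE) _ (defU x xU).
exact: subsetP (reduct_args_sub F S) x (subsetP sUA x xU).
Qed.

Lemma reach_grounded_approx s : reach (@alpha_gr T) (F, set0) s ->
  exists2 S, s = (reduct F S, S) & grounded_approx S.
Proof.
move=> reach_s; have {reach_s} := clos_rt_rtn1 _ _ _ _ reach_s.
elim=> [|s1 s2 step _ [S eS approxS]].
  by exists set0; rewrite ?reduct_set0 //; apply: grounded_approx0.
move: step; rewrite eS => -[U ISuU ->].
by exists (S :|: U); rewrite ?reduct_setU ?IS_u_sub_args //; apply: grounded_approx_step.
Qed.

Lemma leadsto_least_complete F' S :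
  leadsto (@alpha_gr T) (@beta_co T) (F, set0) (F', S) -> least_complete F S.
Proof.
case=> /reach_grounded_approx[S0 [-> ->] [admS leS]] /eqP ISu0.
by split=> //; apply: complete_of_IS_u_reduct0 admS ISu0.
Qed.

End GroundedRuns.

Theorem theorem4 (T : finType) :
  serialisable (@grounded_sem T) (@alpha_gr T) (@beta_co T).
Proof.
move=> F wfF S; split=> [[cS minS] | [F' leadS]]; last first.
  exact/least_complete_grounded/(leadsto_least_complete wfF leadS).
have [S' leadS'] := leadsto_terminal F set0.
rewrite (reduct_set0 wfF) in leadS'.
have [cS' leS'] := leadsto_least_complete wfF leadS'.
by rewrite -(minS S' cS' (leS' S cS)); exists (reduct F S').
Qed.
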